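(* Let $P \subset \mathbb{R}^d$ be a finite point set and let $\mathcal{Q}:\mathbb{R}^d \to P$ be any map. Define the witness-based distance function $\widetilde{d}_{\mathcal{Q}}(x) = \|x - \mathcal{Q}(x)\|$. If there exists at least one point $x \in \mathbb{R}^d$ with $\widetilde{d}_{\mathcal{Q}}(x) \neq d_P(x)$, then $\widetilde{d}_{\mathcal{Q}}$ cannot simultaneously be continuous on $\mathbb{R}^d$ and satisfy a finite relative error bound, i.e. there is no pair of properties ''$\widetilde{d}_{\mathcal{Q}}$ is continuous'' and ''there is a constant $c>0$ with $|\widetilde{d}_{\mathcal{Q}}(y) - d_P(y)| \leq c\, d_P(y)$ for all $y \in \mathbb{R}^d$'' holding at the same time.
   Context: $\|\cdot\|$ is the Euclidean norm and $d_P(x) = \min_{p \in P} \|x - p\|$ is the distance from $x$ to $P$. A function of the form $\widetilde{d}_{\mathcal{Q}}(x) = \|x - \mathcal{Q}(x)\|$, where $\mathcal{Q}$ assigns to each query point a ''witness'' point of $P$, is called witness-based; note $\widetilde{d}_{\mathcal{Q}} \geq d_P$ always. The relative error of $\widetilde{d}_{\mathcal{Q}}$ at $y$ is $(\widetilde{d}_{\mathcal{Q}}(y)-d_P(y))/d_P(y)$. *)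

From HB Require Import structures.
From mathcomp Require Import all_boot all_order all_algebra.
From mathcomp Require Import all_classical all_reals all_analysis.
Set Implicit Arguments. Unset Strict Implicit. Unset Printing Implicit Defensive.
Import Order.TTheory GRing.Theory Num.Theory.
Import numFieldNormedType.Exports.
Local Open Scope ring_scope.

Definition enorm (R : realType) (d : nat) (x : 'rV[R]_d) : R :=
  Num.sqrt (\sum_(i < d) x ord0 i ^+ 2).

Definition distP (R : realType) (d : nat) (P : seq 'rV[R]_d) (x : 'rV[R]_d) : R :=
  \big[Num.min/enorm (x - head 0 P)]_(p <- P) enorm (x - p).

Definition wdist (R : realType) (d : nat) (Q : 'rV[R]_d -> 'rV[R]_d) (x : 'rV[R]_d) : R :=
  enorm (x - Q x).

From HB Require Import structures.
From mathcomp Require Import all_boot all_order all_algebra.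
From mathcomp Require Import ring lra.
From mathcomp Require Import all_classical all_reals all_analysis.
Import Order.TTheory GRing.Theory Num.Theory.
Import numFieldNormedType.Exports.
Local Open Scope ring_scope.

(* Let p be a point of P nearest to x and y t := p + t (x - p). Every other
   q in P satisfies |y t - q|^2 >= |y t - p|^2 + (1 - t) |p - q|^2, so
   g t := w(y t)^2 - |y t - p|^2 is either 0 (when Q picks p) or at least
   (1 - t) mu, mu being the least squared distance from p to the rest of P.
   The relative error bound forces w = 0 on P, hence g 0 = 0; by continuity
   and this gap, g cannot become positive before t = 1, so g 1 <= 0, i.e.
   w(x) <= d_P(x). *)

Lemma continuous_gap_le0 {R : realType} (f : R -> R) (mu : R) :
  0 < mu -> continuous f -> f 0 = 0 ->
  (forall t, 0 <= t < 1 -> f t = 0 \/ (1 - t) * mu <= f t) ->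
  f 1 <= 0.
Proof.
move=> mu0 fc f0 gap; rewrite leNgt; apply/negP => f1.
(* [k] changes sign on [0, 1], yet the gap keeps it away from 0 on [0, 1). *)
pose k t := f t - (1 - t) * (mu / 2).
have kc : continuous k.
  move=> t; apply: cvgB; first exact: fc.
  by apply: cvgM; [apply: cvgB; [exact: cvg_cst | exact: cvg_id] | exact: cvg_cst].
have [t] : exists2 t, t \in `[0, 1] & k t = 0.
  apply: IVT; [exact: ler01 | exact: continuous_subspaceT |].
  rewrite /k f0 !subrr subr0 mul0r subr0 ge_min le_max.
  by apply/andP; split; apply/orP; [left | right]; lra.
rewrite in_itv /= => /andP[t0 t1] kt0.
have [t1E|tlt1] := eqVneq t 1; first by move: kt0; rewrite /k t1E subrr mul0r; lra.
have t1' : t < 1 by rewrite lt_neqAle tlt1.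
have pos : 0 < (1 - t) * mu by rewrite mulr_gt0 // subr_gt0.
have [ft0|ft] : f t = 0 \/ (1 - t) * mu <= f t by apply: gap; rewrite t0.
all: by move: kt0; rewrite /k ?ft0; lra.
Qed.

Lemma seq_pos_lbound {R : realDomainType} {T : eqType} (s : seq T) (f : T -> R) :
  (forall q, q \in s -> 0 < f q) -> exists2 m, 0 < m & forall q, q \in s -> m <= f q.
Proof.
move=> fpos; exists (\big[Num.min/1]_(q <- s) f q).
  by rewrite big_seq lt_bigmin.
by move=> q qs; rewrite ge_bigmin_seq.
Qed.

Section EuclideanNorm.
Context {R : realType} {d : nat}.
Implicit Types (a b x : 'rV[R]_d).

Lemma sqr_enorm x : enorm x ^+ 2 = \sum_(i < d) x ord0 i ^+ 2.
Proof. by rewrite sqr_sqrtr //; apply: sumr_ge0 => i _; apply: sqr_ge0. Qed.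

Lemma enorm_ge0 x : 0 <= enorm x.
Proof. exact: sqrtr_ge0. Qed.

Lemma enorm_eq0 x : (enorm x == 0) = (x == 0).
Proof.
rewrite -sqrf_eq0 sqr_enorm psumr_eq0 => [|i _]; last exact: sqr_ge0.
apply/allP/eqP => [x0|-> i _]; last by rewrite mxE sqrf_eq0 eqxx.
apply/matrixP => i j; rewrite ord1 mxE.
by have /(_ (mem_index_enum j)) := x0 j; rewrite sqrf_eq0 => /eqP.
Qed.

Lemma enorm0 : enorm (0 : 'rV[R]_d) = 0.
Proof. by apply/eqP; rewrite enorm_eq0. Qed.

Lemma sqr_enormZ (t : R) a : enorm (t *: a) ^+ 2 = t ^+ 2 * enorm a ^+ 2.
Proof. by rewrite !sqr_enorm mulr_sumr; apply: eq_bigr => i _; rewrite mxE exprMn. Qed.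

Lemma sqr_enormZD (t : R) a b :
  enorm (t *: a + b) ^+ 2 =
  t ^+ 2 * enorm a ^+ 2 + (1 - t) * enorm b ^+ 2 + t * (enorm (a + b) ^+ 2 - enorm a ^+ 2).
Proof.
rewrite !sqr_enorm -sumrB !mulr_sumr -!big_split /=.
by apply: eq_bigr => i _; rewrite !mxE; ring.
Qed.

Lemma sqr_enormZD_ge (t : R) a b : 0 <= t -> enorm a <= enorm (a + b) ->
  t ^+ 2 * enorm a ^+ 2 + (1 - t) * enorm b ^+ 2 <= enorm (t *: a + b) ^+ 2.
Proof.
move=> t0 ab; rewrite sqr_enormZD lerDl mulr_ge0 // subr_ge0.
by rewrite ler_sqr ?nnegrE ?enorm_ge0.
Qed.

End EuclideanNorm.

Section DistanceToPointSet.
Context {R : realType} {d : nat} (P : seq 'rV[R]_d).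
Implicit Types (p q x : 'rV[R]_d).

Lemma distP_le x q : q \in P -> distP P x <= enorm (x - q).
Proof. by move=> qP; rewrite /distP ge_bigmin_seq. Qed.

Lemma distP_ge0 x : 0 <= distP P x.
Proof. by rewrite /distP le_bigmin // => *; apply: enorm_ge0. Qed.

Lemma distP_eq0 p : p \in P -> distP P p = 0.
Proof.
move=> pP; apply/le_anti; rewrite distP_ge0 andbT.
by apply: le_trans (distP_le p p pP) _; rewrite subrr enorm0.
Qed.

Lemma distP_attained x : P != [::] ->
  exists2 p, p \in P & distP P x = enorm (x - p).
Proof.
move=> P0; rewrite /distP big_seq.
apply: (big_ind (fun v => exists2 p, p \in P & v = enorm (x - p))).
- by exists (head 0 P) => //; case: P P0 => // ? ? _; rewrite mem_head.
- by move=> _ _ [p pP ->] [q qP ->]; case: leP => _; [exists p | exists q].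
- by move=> p pP; exists p.
Qed.

Lemma exists_sqr_dist_lbound p : exists2 mu, 0 < mu &
  forall q, q \in P -> q != p -> mu <= enorm (p - q) ^+ 2.
Proof.
have [|mu mu0 lb] := seq_pos_lbound [seq q <- P | q != p] (fun q => enorm (p - q) ^+ 2).
  move=> q; rewrite mem_filter => /andP[qp _].
  by rewrite exprn_gt0 // lt_neqAle enorm_ge0 andbT eq_sym enorm_eq0 subr_eq0 eq_sym.
by exists mu => // q qP qp; apply: lb; rewrite mem_filter qp.
Qed.

End DistanceToPointSet.

Section WitnessDistance.
Context {R : realType} {d : nat} {P : seq 'rV[R]_d} {Q : 'rV[R]_d -> 'rV[R]_d}.
Hypothesis QP : forall x, Q x \in P.

Lemma distP_le_wdist x : distP P x <= wdist Q x.
Proof. exact: distP_le. Qed.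

Lemma wdist_le_nearest x p : p \in P ->
  (forall q, q \in P -> enorm (x - p) <= enorm (x - q)) ->
  continuous (wdist Q) -> wdist Q p = 0 -> wdist Q x <= enorm (x - p).
Proof.
move=> pP nearest wc wp0.
have [mu mu0 sep] := exists_sqr_dist_lbound P p.
pose a := x - p.
pose g t := wdist Q (p + t *: a) ^+ 2 - t ^+ 2 * enorm a ^+ 2.
suff : g 1 <= 0.
  by rewrite /g /wdist scale1r /a [p + _]addrC subrK expr1n mul1r subr_le0
    ler_sqr ?nnegrE ?enorm_ge0.
apply: (continuous_gap_le0 _ _ mu0).
- have segc : continuous (fun t : R => p + t *: a).
    by move=> t; apply: cvgD; [exact: cvg_cst | apply: cvgZr_tmp; exact: cvg_id].
  move=> t; apply: cvgB; last by apply: cvgM; [exact: exprn_continuous | exact: cvg_cst].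
  exact: (continuous_comp (continuous_comp (segc t) (wc _)) (@exprn_continuous R 2 _)).
- by rewrite /g scale0r addr0 wp0 !expr2 !mul0r subrr.
move=> t /andP[t0 t1]; rewrite /g /wdist.
have := QP (p + t *: a); set q := Q _ => qP.
have [->|qp] := eqVneq q p; [left | right].
  by rewrite addrAC subrr add0r sqr_enormZ subrr.
have -> : p + t *: a - q = t *: a + (p - q) by rewrite [p + _]addrC -addrA.
have near_q : enorm a <= enorm (a + (p - q)) by rewrite /a addrA subrK nearest.
have := sqr_enormZD_ge t a (p - q) t0 near_q.
have : (1 - t) * mu <= (1 - t) * enorm (p - q) ^+ 2.
  by apply: ler_wpM2l; [rewrite subr_ge0 ltW | exact: sep].
lra.
Qed.

End WitnessDistance.

Theorem lemma1 (R : realType) (d : nat) (P : seq 'rV[R]_d)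
  (Q : 'rV[R]_d -> 'rV[R]_d) (HQ : forall x, Q x \in P)
  (Hx : exists x : 'rV[R]_d, wdist Q x <> distP P x) :
  ~ (continuous (wdist Q) /\
     exists c : R, 0 < c /\
       forall y : 'rV[R]_d, `|wdist Q y - distP P y| <= c * distP P y).
Proof.
move=> [wc [c [_ rel]]]; case: Hx => x; apply.
have P0 : P != [::] by apply: contraTneq (HQ x) => ->.
have [p pP distE] := distP_attained P x P0.
have wp0 : wdist Q p = 0.
  by have := rel p; rewrite distP_eq0 // mulr0 subr0 normr_le0 => /eqP.
apply/le_anti; rewrite (distP_le_wdist HQ) andbT distE.
by apply: (wdist_le_nearest HQ) => // q qP; rewrite -distE distP_le.
Qed.
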